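(* (i) The Posterior Belief Assessment $P_{\mathcal{Z}}(X)$ is at least as close to the truth $X$ as any observed result from a single AI system, i.e. for every element $Z_{ij}$ of $\boldsymbol{Z}$, $$\|X-P_{\mathcal{Z}}(X)\|^2\le \|X-Z_{ij}\|^2 .$$ (ii) The Posterior Belief Assessment $P_{\mathcal{Z}}(X)$ satisfies the inequality in (i) purely by virtue of being at least as close to true belief $P_t(X)$ as any observed result from a single AI system: for every $Z_{ij}$, $$\|P_t(X)-P_{\mathcal{Z}}(X)\|^2\le \|P_t(X)-Z_{ij}\|^2,$$ and this inequality is equivalent to the inequality $\|X-P_{\mathcal{Z}}(X)\|^2\le \|X-Z_{ij}\|^2$ (the common term $\|X-P_t(X)\|^2$ cancels), so that PBA is explicitly an $\mathcal{M}$-open form of inference.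
   Context: Subjectivist / Bayes linear setting: $P(\cdot)$ denotes a primitive expectation (prevision). $X$ is a (vector) quantity of interest. There are $m$ co-exchangeable classes of AI-system estimates with $n_i$ members in class $i$; $\boldsymbol{Z}=\{Z_{ij}: i=1,\dots,m;\ j=1,\dots,n_i\}$, where $Z_{ij}$ is the estimate of $X$ from the $j$th model in class $i$. Within-class exchangeability gives $Z_{ij}=\mu_i+\mathcal{R}_{ij}$ with $\mu_i$ and $\mathcal{R}_{ij}$ uncorrelated and $P(\mathcal{R}_{ij})=0$. Co-exchangeability with $X$ is assumed via $X=\sum_{i=1}^m A_i\mu_i+\boldsymbol{U}=\boldsymbol{\mathcal{A}}\boldsymbol{\mu}+\boldsymbol{U}$, with $\boldsymbol{\mathcal{A}}=(A_1,\dots,A_m)$ known and $\boldsymbol{U}$ uncorrelated with all $\mu_i$ and $\mathcal{R}_{ij}$. The inner product is $\langle X,Y\rangle=P(X^{T}Y)$ with associated norm $\|\cdot\|$. The adjusted expectation (orthogonal projection onto affine combinations of $\boldsymbol{Z}$) is $P_{\boldsymbol{Z}}(X)=P(X)+\mathrm{Cov}(X,\boldsymbol{Z})\mathrm{Var}(\boldsymbol{Z})^{\dagger}(\boldsymbol{Z}-P(\boldsymbol{Z}))$, $\dagger$ the Moore–Penrose inverse. With class sample means $\overline{Z}_i=\frac{1}{n_i}\sum_j Z_{ij}$, $\overline{\boldsymbol{Z}}=(\overline{Z}_1,\dots,\overline{Z}_m)$, set $\mathcal{Z}=P_{\overline{\boldsymbol{Z}}}(\boldsymbol{\mu})$; the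 PBA is $P_{\mathcal{Z}}(X)$, and it is known (earlier results) that $P_{\boldsymbol{Z}}(X)=P_{\mathcal{Z}}(X)=\boldsymbol{\mathcal{A}}P_{\boldsymbol{Z}}(\boldsymbol{\mu})+P(\boldsymbol{U})$. $P_t(X)$ is the prevision (true belief) for $X$ at the time $t$ by which all $Z_{ij}$ are observed; previsions are assumed conglomerable, $P(P_t(X))=P(X)$, so that for any $W$ known at time $t$, $(X-W)=(X-P_t(X))\oplus(P_t(X)-W)$ is a sum of orthogonal components. *)

(* Abstract subjectivist / Bayes linear setting:
   scalar random quantities form a commutative R-algebra Q, a prevision
   P : Q -> R is a linear functional with P 1 = 1 and P (x*x) >= 0.
   Vector quantities of dimension d are column vectors 'cV[Q]_d. *)
From HB Require Import structures.
From mathcomp Require Import all_boot all_order all_algebra.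
Set Implicit Arguments. Unset Strict Implicit. Unset Printing Implicit Defensive.
Import Order.TTheory GRing.Theory Num.Theory.
Local Open Scope ring_scope.

Section BayesLinear.
Variables (R : realFieldType) (Q : comAlgType R).

Definition prevision (P : Q -> R) : Prop :=
  [/\ forall x y, P (x + y) = P x + P y,
      forall (a : R) x, P (a *: x) = a * P x,
      P 1 = 1 & forall x, 0 <= P (x * x)].

Definition inner (P : Q -> R) d (X Y : 'cV[Q]_d) : R :=
  P (\sum_(k < d) X k 0 * Y k 0).

Definition liftc d (c : 'cV[R]_d) : 'cV[Q]_d := map_mx (fun r : R => r%:A) c.
Definition liftm d (B : 'M[R]_d) : 'M[Q]_d := map_mx (fun r : R => r%:A) B.

Definition in_aff d (T : finType) (G : T -> 'cV[Q]_d) (W : 'cV[Q]_d) : Prop :=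
  exists (c : 'cV[R]_d) (B : T -> 'M[R]_d),
    W = liftc c + \sum_(t : T) liftm (B t) *m G t.

(* W = P_G(X): the orthogonal projection of X onto affine combinations of G *)
Definition adj_exp (P : Q -> R) d (T : finType) (G : T -> 'cV[Q]_d)
  (X W : 'cV[Q]_d) : Prop :=
  in_aff G W /\ forall V, in_aff G V -> inner P (X - W) V = 0.

Definition prev_vec (P : Q -> R) d (X : 'cV[Q]_d) : 'cV[R]_d :=
  \col_(k < d) P (X k 0).

Definition uncorr (P : Q -> R) d (X Y : 'cV[Q]_d) : Prop :=
  forall k l, P (X k 0 * Y l 0) = P (X k 0) * P (Y l 0).

Definition est_idx m (n : 'I_m -> nat) := {i : 'I_m & 'I_(n i)}.

Definition class_mean m (n : 'I_m -> nat) d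
  (Z : {i : 'I_m & 'I_(n i)} -> 'cV[Q]_d) (i : 'I_m) : 'cV[Q]_d :=
  (((n i)%:R)^-1 : R)%:A *: \sum_(j < n i) Z (@Tagged 'I_m i (fun i => 'I_(n i)) j).

End BayesLinear.

(* The PBA is the orthogonal projection of X onto the affine span of the
   estimates, and each single estimate Z_ij lies in that span; Pythagoras in
   the prevision inner product therefore gives ||X - PBA|| <= ||X - Z_ij||.
   Both PBA and Z_ij are known at time t, so X - P_t(X) is orthogonal to
   P_t(X) - PBA and to P_t(X) - Z_ij: the distances to X and to P_t(X) differ
   by the same term ||X - P_t(X)||^2, which makes the two comparisons
   equivalent. *)
From HB Require Import structures.
From mathcomp Require Import all_boot all_order all_algebra.
Import Order.TTheory GRing.Theory Num.Theory.
Local Open Scope ring_scope.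

Section PrevisionInnerProduct.
Context {R : realFieldType} {Q : comAlgType R} {P : Q -> R}.
Hypothesis prevP : prevision P.

Lemma prevD x y : P (x + y) = P x + P y.
Proof. by case: prevP. Qed.

Lemma prevN x : P (- x) = - P x.
Proof. by case: prevP => _ prevZ _ _; rewrite -scaleN1r prevZ mulN1r. Qed.

Lemma prevB x y : P (x - y) = P x - P y.
Proof. by rewrite prevD prevN. Qed.

Lemma prev0 : P 0 = 0.
Proof. by rewrite -(subrr (1 : Q)) prevB subrr. Qed.

Lemma prev_sum {d} (f : 'I_d -> Q) : P (\sum_(k < d) f k) = \sum_(k < d) P (f k).
Proof. exact: (big_morph P prevD prev0). Qed.

Lemma innerE {d} (X Y : 'cV[Q]_d) : inner P X Y = \sum_(k < d) P (X k 0 * Y k 0).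
Proof. by rewrite /inner prev_sum. Qed.

Lemma innerC {d} (X Y : 'cV[Q]_d) : inner P X Y = inner P Y X.
Proof. by rewrite /inner; congr P; apply: eq_bigr => k _; rewrite mulrC. Qed.

Lemma inner_ge0 {d} (X : 'cV[Q]_d) : 0 <= inner P X X.
Proof. by rewrite innerE; apply: sumr_ge0 => k _; case: prevP. Qed.

Lemma innerDr {d} (X V W : 'cV[Q]_d) :
  inner P X (V + W) = inner P X V + inner P X W.
Proof. by rewrite !innerE -big_split; apply: eq_bigr => k _; rewrite !mxE mulrDr prevD. Qed.

Lemma innerBr {d} (X V W : 'cV[Q]_d) :
  inner P X (V - W) = inner P X V - inner P X W.
Proof. by rewrite !innerE -sumrB; apply: eq_bigr => k _; rewrite !mxE mulrBr prevB. Qed.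

Lemma pythagoras {d} {a b : 'cV[Q]_d} : inner P a b = 0 ->
  inner P (a + b) (a + b) = inner P a a + inner P b b.
Proof.
move=> ab0; rewrite !innerDr [inner P (a + b) a]innerC [inner P (a + b) b]innerC.
by rewrite !innerDr [inner P b a]innerC ab0 addr0 add0r.
Qed.

Lemma sqdist_split {d} {X Y W : 'cV[Q]_d} : inner P (X - Y) (Y - W) = 0 ->
  inner P (X - W) (X - W) = inner P (X - Y) (X - Y) + inner P (Y - W) (Y - W).
Proof. by move=> orth; rewrite -pythagoras // addrA subrK. Qed.

Lemma adj_exp_sqdist_le {d} {T : finType} {G : T -> 'cV[Q]_d} {X W V : 'cV[Q]_d} :
  adj_exp P G X W -> in_aff G V ->
  inner P (X - W) (X - W) <= inner P (X - V) (X - V).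
Proof.
move=> [affW orthW] affV.
have orth : inner P (X - W) (W - V) = 0 by rewrite innerBr !orthW ?subrr.
by rewrite (sqdist_split orth) lerDl inner_ge0.
Qed.

Lemma sqdist_le_transfer {d} {X Y W V : 'cV[Q]_d} :
  inner P (X - Y) (Y - W) = 0 -> inner P (X - Y) (Y - V) = 0 ->
  (inner P (Y - W) (Y - W) <= inner P (Y - V) (Y - V)
   <-> inner P (X - W) (X - W) <= inner P (X - V) (X - V)).
Proof. by move=> orthW orthV; rewrite (sqdist_split orthW) (sqdist_split orthV) lerD2l. Qed.

End PrevisionInnerProduct.

Lemma in_aff_self {R : realFieldType} {Q : comAlgType R} {d} {T : finType}
  (G : T -> 'cV[Q]_d) t : in_aff G (G t).
Proof.
exists 0, (fun s => if s == t then 1%:M else 0).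
have lift0 : liftm Q (0 : 'M[R]_d) = 0.
  by apply/matrixP => i j; rewrite !mxE scale0r.
have lift1 : liftm Q (1%:M : 'M[R]_d) = 1%:M.
  by apply/matrixP => i j; rewrite !mxE; case: (i == j); rewrite ?scale1r ?scale0r.
have liftc0 : liftc Q (0 : 'cV[R]_d) = 0.
  by apply/matrixP => i j; rewrite !mxE scale0r.
rewrite (bigD1 t) //= eqxx lift1 mul1mx liftc0 add0r big1 ?addr0 //.
by move=> s /negbTE ->; rewrite lift0 mul0mx.
Qed.

Theorem theorem3p1
  (R : realFieldType) (Q : comAlgType R) (P : Q -> R)
  (d m : nat) (n : 'I_m -> nat)
  (Z : {i : 'I_m & 'I_(n i)} -> 'cV[Q]_d)
  (mu : 'I_m -> 'cV[Q]_d) (Res : {i : 'I_m & 'I_(n i)} -> 'cV[Q]_d)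
  (A : 'I_m -> 'M[R]_d) (U X : 'cV[Q]_d)
  (Pt : 'cV[Q]_d) (known : 'cV[Q]_d -> Prop)
  (Zcal : 'I_m -> 'cV[Q]_d) (PBA : 'cV[Q]_d) :
  prevision P ->
  (forall i, (0 < n i)%N) ->
  (* within-class exchangeability representation *)
  (forall t, Z t = mu (tag t) + Res t) ->
  (forall t, prev_vec P (Res t) = 0) ->
  (forall i t, uncorr P (mu i) (Res t)) ->
  (* co-exchangeability with X *)
  X = \sum_(i < m) liftm Q (A i) *m mu i + U ->
  (forall i, uncorr P U (mu i)) ->
  (forall t, uncorr P U (Res t)) ->
  (* Zcal = P_{Zbar}(mu), componentwise in the classes *)
  (forall i, adj_exp P (class_mean Z) (mu i) (Zcal i)) ->
  (* PBA = P_{Zcal}(X) *)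
  adj_exp P Zcal X PBA ->
  (* earlier result: P_Z(X) = P_{Zcal}(X) *)
  adj_exp P Z X PBA ->
  (* true belief P_t(X) at time t: everything known at time t (in particular
     every affine combination of the Z_ij) gives an orthogonal decomposition *)
  (forall W, in_aff Z W -> known W) ->
  (forall W, known W -> inner P (X - Pt) (Pt - W) = 0) ->
  forall t : {i : 'I_m & 'I_(n i)},
    inner P (X - PBA) (X - PBA) <= inner P (X - Z t) (X - Z t)
    /\ inner P (Pt - PBA) (Pt - PBA) <= inner P (Pt - Z t) (Pt - Z t)
    /\ (inner P (Pt - PBA) (Pt - PBA) <= inner P (Pt - Z t) (Pt - Z t)
        <-> inner P (X - PBA) (X - PBA) <= inner P (X - Z t) (X - Z t)).
Proof.
move=> prevP _ _ _ _ _ _ _ _ _ PBA_proj Z_known Pt_orth t.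
have affZt := in_aff_self Z t.
have closer_to_X := adj_exp_sqdist_le prevP PBA_proj affZt.
have transfer := sqdist_le_transfer prevP
  (Pt_orth _ (Z_known _ PBA_proj.1)) (Pt_orth _ (Z_known _ affZt)).
by split; [|split; [apply/transfer|]].
Qed.
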